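(* Let $A\in\mathbb{R}^{2\times2}$ be symmetric positive definite and $E=\{x\in\mathbb{R}^2:x^{\top}A^{-1}x=1\}$. For every $x_0\in E$ there exists a parallelogram $P$ inscribed in $E$ having $x_0$ as a vertex with \[ S(P)=4\sqrt{\det A}\,\sqrt{\operatorname{tr}(A^{-1})}=4\sqrt{\operatorname{tr}(A)}. \]
   Context: A centred parallelogram with linearly independent edge vectors $v_1,v_2$ is $P=\{t_1v_1+t_2v_2:|t_i|\le\tfrac12\}$ with vertices $\tfrac12(\pm v_1\pm v_2)$; it is inscribed in $E$ if all four vertices lie on $E$. Here $S(P)$ (the total measure of the facets, i.e. the edges) is the perimeter $2(\|v_1\|+\|v_2\|)$. *)

From mathcomp Require Import all_boot all_order all_algebra.
Set Implicit Arguments. Unset Strict Implicit. Unset Printing Implicit Defensive.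
Import Order.TTheory GRing.Theory Num.Theory.
Local Open Scope ring_scope.

Definition qform (R : rcfType) (M : 'M[R]_2) (x : 'cV[R]_2) : R :=
  (x^T *m M *m x) 0 0.

Definition spd (R : rcfType) (A : 'M[R]_2) : Prop :=
  A^T = A /\ forall x : 'cV[R]_2, x != 0 -> 0 < qform A x.

Definition ellipse (R : rcfType) (A : 'M[R]_2) (x : 'cV[R]_2) : Prop :=
  qform (invmx A) x = 1.

Definition enorm (R : rcfType) (v : 'cV[R]_2) : R :=
  Num.sqrt (\sum_(i < 2) v i 0 ^+ 2).

Definition lin_indep2 (R : rcfType) (v1 v2 : 'cV[R]_2) : Prop :=
  forall a b : R, a *: v1 + b *: v2 = 0 -> a = 0 /\ b = 0.

Definition pvertex (R : rcfType) (v1 v2 : 'cV[R]_2) (e1 e2 : bool) : 'cV[R]_2 :=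
  2^-1 *: ((-1) ^+ e1 *: v1 + (-1) ^+ e2 *: v2).

Definition inscribed (R : rcfType) (A : 'M[R]_2) (v1 v2 : 'cV[R]_2) : Prop :=
  forall e1 e2 : bool, ellipse A (pvertex v1 v2 e1 e2).

Definition perimeter (R : rcfType) (v1 v2 : 'cV[R]_2) : R :=
  2 * (enorm v1 + enorm v2).

From mathcomp Require Import all_boot all_order all_algebra ring lra.
Set Implicit Arguments. Unset Strict Implicit. Unset Printing Implicit Defensive.
Import Order.TTheory GRing.Theory Num.Theory.
Local Open Scope ring_scope.

(* Two points x0, w of the ellipse span the inscribed parallelogram with
   vertices +-x0, +-w and edge vectors x0 + w, x0 - w.  Write T = tr A,
   D = det A and adj A = T I - A, and take for w the point of the ellipse
   orthogonal to adj(A)^2 x0.  A polynomial identity then gives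
   T (|x0|^2 + |w|^2 - T) = (x0.w)^2, and Cayley-Hamilton for adj A shows
   |x|^2 <= T on the ellipse; hence |x0 +- w| = (T +- x0.w) / sqrt T and the
   perimeter is 4 sqrt T.  Finally tr(A^-1) = T / D. *)

Section Plane.
Variable R : rcfType.
Implicit Types (a b : R) (x w v : 'cV[R]_2) (M : 'M[R]_2).

Lemma sum_ord2 (F : 'I_2 -> R) : \sum_(i < 2) F i = F 0 + F 1.
Proof. by rewrite !big_ord_recl big_ord0 addr0; congr (_ + F _); exact: val_inj. Qed.

Lemma lift_ord2 : (lift 0 0 = 1 :> 'I_2) * (lift 1 0 = 0 :> 'I_2).
Proof. by split; exact: val_inj. Qed.

Lemma det_mx22 M : \det M = M 0 0 * M 1 1 - M 0 1 * M 1 0.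
Proof.
rewrite (expand_det_row _ 0) sum_ord2 /cofactor !det_mx11 !mxE /= !lift_ord2.
by rewrite expr0 expr1 mul1r mulN1r mulrN.
Qed.

Lemma mxtrace22 M : \tr M = M 0 0 + M 1 1.
Proof. by rewrite /mxtrace sum_ord2. Qed.

Lemma invmx22 M : \det M != 0 ->
  [/\ invmx M 0 0 = M 1 1 / \det M, invmx M 0 1 = - M 0 1 / \det M,
      invmx M 1 0 = - M 1 0 / \det M & invmx M 1 1 = M 0 0 / \det M].
Proof.
move=> detM; rewrite /invmx unitmxE unitfE detM !mxE /cofactor !det_mx11 !mxE /=.
rewrite !lift_ord2 /=.
by split; rewrite mulrC ?expr0 ?expr1 ?mul1r ?mulN1r // expr2 mulN1r opprK mul1r.
Qed.

Lemma qformE M v : qform M v =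
  M 0 0 * v 0 0 ^+ 2 + (M 0 1 + M 1 0) * v 0 0 * v 1 0 + M 1 1 * v 1 0 ^+ 2.
Proof. rewrite /qform !mxE !sum_ord2 !mxE !sum_ord2 !mxE; ring. Qed.

Lemma qformZ M a v : qform M (a *: v) = a ^+ 2 * qform M v.
Proof. rewrite !qformE !mxE; ring. Qed.

Definition vec2 a b : 'cV[R]_2 := \col_i (if i == 0 then a else b).

Lemma vec2_eta v : v = vec2 (v 0 0) (v 1 0).
Proof.
by apply/matrixP => i j; rewrite mxE ord1; case: i => [[|[|//]]] ?; congr (v _ _); exact: val_inj.
Qed.

Lemma vec2_eq0 a b : (vec2 a b == 0) = (a == 0) && (b == 0).
Proof.
apply/eqP/andP => [ab0 | [/eqP-> /eqP->]].
  by split; apply/eqP;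
    [move/(congr1 (fun v => v 0 0)): ab0 | move/(congr1 (fun v => v 1 0)): ab0]; rewrite !mxE.
by apply/matrixP => i j; rewrite !mxE; case: ifP.
Qed.

Definition dot2 x w := x 0 0 * w 0 0 + x 1 0 * w 1 0.

Lemma dot2_gt0 v : v != 0 -> 0 < dot2 v v.
Proof.
rewrite [v in v != 0]vec2_eta vec2_eq0 /dot2 -!expr2 lt_def addr_ge0 ?sqr_ge0 // andbT.
by rewrite paddr_eq0 ?sqr_ge0 // !sqrf_eq0.
Qed.

Lemma dot2Zl a x w : dot2 (a *: x) w = a * dot2 x w.
Proof. rewrite /dot2 !mxE; ring. Qed.

Lemma dot2Zr a x w : dot2 x (a *: w) = a * dot2 x w.
Proof. rewrite /dot2 !mxE; ring. Qed.

Definition cross2 x w := x 0 0 * w 1 0 - x 1 0 * w 0 0.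

Lemma cross2Zr a x w : cross2 x (a *: w) = a * cross2 x w.
Proof. rewrite /cross2 !mxE; ring. Qed.

Definition quarter_turn v := vec2 (- v 1 0) (v 0 0).

Lemma cross2_quarter_turn x w : cross2 x (quarter_turn w) = dot2 x w.
Proof. rewrite /cross2 /dot2 !mxE /=; ring. Qed.

Lemma enormE v : enorm v = Num.sqrt (dot2 v v).
Proof. by rewrite /enorm sum_ord2 /dot2 !expr2. Qed.

Lemma pvertex_addsub x w e1 e2 :
  pvertex (x + w) (x - w) e1 e2 = (-1) ^+ e1 *: (if e1 == e2 then x else w).
Proof.
rewrite /pvertex; apply/matrixP => i j.
by case: e1; case: e2; rewrite !mxE /= ?expr0 ?expr1; field; rewrite ?pnatr_eq0.
Qed.

Lemma inscribed_addsub A x w :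
  ellipse A x -> ellipse A w -> inscribed A (x + w) (x - w).
Proof.
by move=> Ex Ew e1 e2; rewrite /ellipse pvertex_addsub qformZ sqrr_sign mul1r; case: eqP.
Qed.

Lemma lin_indep2_addsub x w : lin_indep2 x w -> lin_indep2 (x + w) (x - w).
Proof.
move=> indep a b; rewrite !scalerDr !scalerN addrACA -scalerDl -scalerBl.
by move=> /indep [ab0 ab0']; split; lra.
Qed.

Lemma lin_indep2_cross x w : cross2 x w != 0 -> lin_indep2 x w.
Proof.
move=> cross0 a b abv.
have [e0 e1] : a * x 0 0 + b * w 0 0 = 0 /\ a * x 1 0 + b * w 1 0 = 0.
  by split; [move/(congr1 (fun v => v 0 0)): abv | move/(congr1 (fun v => v 1 0)): abv];
     rewrite !mxE.
have /eqP : a * (x 0 0 * w 1 0 - x 1 0 * w 0 0) = 0.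
  have -> : a * (x 0 0 * w 1 0 - x 1 0 * w 0 0) =
            w 1 0 * (a * x 0 0 + b * w 0 0) - w 0 0 * (a * x 1 0 + b * w 1 0) by ring.
  by rewrite e0 e1; ring.
have /eqP : b * (x 0 0 * w 1 0 - x 1 0 * w 0 0) = 0.
  have -> : b * (x 0 0 * w 1 0 - x 1 0 * w 0 0) =
            x 0 0 * (a * x 1 0 + b * w 1 0) - x 1 0 * (a * x 0 0 + b * w 0 0) by ring.
  by rewrite e0 e1; ring.
by rewrite /cross2 in cross0; rewrite !mulf_eq0 (negPf cross0) !orbF => /eqP-> /eqP->.
Qed.

Lemma sqrt_add_sqrt_sub (T m c : R) : 0 < T -> m <= 2 * T ->
  T * (m - T) = c ^+ 2 -> Num.sqrt (m + 2 * c) + Num.sqrt (m - 2 * c) = 2 * Num.sqrt T.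
Proof.
move=> T_gt0 m_le c2E.
set q := Num.sqrt T; have q_gt0 : 0 < q by rewrite sqrtr_gt0.
have qE : q ^+ 2 = T by rewrite sqr_sqrtr ?ltW.
have c_le : c ^+ 2 <= T ^+ 2 by rewrite -c2E expr2 ler_pM2l //; lra.
have [Tc_ge0 Tc'_ge0] : 0 <= T + c /\ 0 <= T - c by split; nra.
have sqrt_sq u : 0 <= u -> Num.sqrt ((u / q) ^+ 2) = u / q.
  by move=> u_ge0; rewrite sqrtr_sqr ger0_norm // divr_ge0 // ltW.
have -> : m + 2 * c = ((T + c) / q) ^+ 2.
  by rewrite expr_div_n qE; apply: (mulIf (lt0r_neq0 T_gt0)); rewrite divfK ?gt_eqF //; nra.
have -> : m - 2 * c = ((T - c) / q) ^+ 2.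
  by rewrite expr_div_n qE; apply: (mulIf (lt0r_neq0 T_gt0)); rewrite divfK ?gt_eqF //; nra.
by rewrite !sqrt_sq // -mulrDl -qE; field; rewrite gt_eqF.
Qed.

Lemma perimeter_addsub (T : R) x w : 0 < T -> dot2 x x <= T -> dot2 w w <= T ->
  T * (dot2 x x + dot2 w w - T) = dot2 x w ^+ 2 ->
  perimeter (x + w) (x - w) = 4 * Num.sqrt T.
Proof.
move=> T_gt0 x_le w_le key; rewrite /perimeter !enormE.
have -> : dot2 (x + w) (x + w) = (dot2 x x + dot2 w w) + 2 * dot2 x w.
  by rewrite /dot2 !mxE; ring.
have -> : dot2 (x - w) (x - w) = (dot2 x x + dot2 w w) - 2 * dot2 x w.
  by rewrite /dot2 !mxE; ring.
by rewrite (sqrt_add_sqrt_sub T_gt0) //; [ring | lra].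
Qed.
End Plane.

Section AdjugateForm.
Variables (R : rcfType) (p r s : R).
Hypotheses (s_gt0 : 0 < s) (det_gt0 : 0 < p * s - r ^+ 2).
Implicit Types (a : R) (x w v : 'cV[R]_2).

Local Notation D := (p * s - r ^+ 2).
Local Notation T := (p + s).

(* For A = [[p, r], [r, s]]: [adjq v] is v^T (adj A) v and [adjv v] is (adj A) v. *)
Definition adjq v := s * v 0 0 ^+ 2 - 2 * r * v 0 0 * v 1 0 + p * v 1 0 ^+ 2.

Definition adjv v := vec2 (s * v 0 0 - r * v 1 0) (p * v 1 0 - r * v 0 0).

Lemma adjq_gt0 v : v != 0 -> 0 < adjq v.
Proof.
rewrite [v in v != 0]vec2_eta vec2_eq0 negb_and /adjq.
set x := v 0 0; set y := v 1 0 => xy_neq0.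
have sE : s * (s * x ^+ 2 - 2 * r * x * y + p * y ^+ 2) = (s * x - r * y) ^+ 2 + D * y ^+ 2.
  by ring.
rewrite -(pmulr_rgt0 _ s_gt0) sE.
have [y0|y_neq0] := eqVneq y 0; last by rewrite ltr_wpDl ?sqr_ge0 // mulr_gt0 // exprn_even_gt0.
move: xy_neq0; rewrite y0 eqxx orbF => x_neq0.
by rewrite mulr0 subr0 (expr2 0) !mulr0 addr0 exprn_even_gt0 //= mulf_neq0 // gt_eqF.
Qed.

(* adj(A)^2 = tr(A) adj(A) - det(A) I *)
Lemma adjq_CayleyHamilton v : T * adjq v - D * dot2 v v = dot2 (adjv v) (adjv v).
Proof. rewrite /adjq /dot2 !mxE /=; ring. Qed.

Lemma dot2_le_trace v : adjq v = D -> dot2 v v <= T.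
Proof.
move=> vE; have := adjq_CayleyHamilton v; rewrite vE mulrC -mulrBr => CH.
have : 0 <= D * (T - dot2 v v) by rewrite CH /dot2 addr_ge0 // -expr2 sqr_ge0.
by rewrite pmulr_rge0 // subr_ge0.
Qed.

Lemma adjqZ a v : adjq (a *: v) = a ^+ 2 * adjq v.
Proof. rewrite /adjq !mxE; ring. Qed.

Lemma adjv_neq0 v : adjq v = D -> adjv v != 0.
Proof.
move=> vE; apply/negP; rewrite /adjv vec2_eq0 => /andP[/eqP n1 /eqP n2].
have Dx : D * v 0 0 = p * (s * v 0 0 - r * v 1 0) + r * (p * v 1 0 - r * v 0 0) by ring.
have Dy : D * v 1 0 = r * (s * v 0 0 - r * v 1 0) + s * (p * v 1 0 - r * v 0 0) by ring.
rewrite n1 n2 !mulr0 addr0 in Dx Dy.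
move/eqP: Dx; move/eqP: Dy; rewrite !mulf_eq0 (gt_eqF det_gt0) /= => /eqP y0 /eqP x0.
by move: det_gt0; rewrite -vE /adjq x0 y0 !(mulr0, mul0r, expr2, subr0, addr0) ltxx.
Qed.

Lemma partner_identity v :
  let n := adjv v in let b := quarter_turn (adjv n) in
  T * (adjq n * dot2 v v + dot2 b b - T * adjq n) - dot2 v b ^+ 2 =
  T * (adjq v - D) * (T * adjq v - D * dot2 v v).
Proof. rewrite /adjq /adjv /quarter_turn /dot2 !mxE /=; ring. Qed.

Lemma adjq_quarter_turn_adjv v : adjq (quarter_turn (adjv v)) = D * adjq v.
Proof. rewrite /adjq /adjv /quarter_turn !mxE /=; ring. Qed.

Lemma dot2_adjv x w : dot2 x (adjv w) = dot2 (adjv x) w.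
Proof. rewrite /dot2 /adjv !mxE /=; ring. Qed.

(* The point of the ellipse orthogonal to adj(A)^2 v. *)
Definition partner v :=
  (Num.sqrt (adjq (adjv v)))^-1 *: quarter_turn (adjv (adjv v)).

Lemma partner_spec v : adjq v = D ->
  [/\ adjq (partner v) = D, cross2 v (partner v) != 0 &
      T * (dot2 v v + dot2 (partner v) (partner v) - T) = dot2 v (partner v) ^+ 2].
Proof.
move=> vE; have n_neq0 := adjv_neq0 vE.
have key := partner_identity v; rewrite vE subrr mulr0 mul0r /= in key.
set n := adjv v in n_neq0 key *; set b := quarter_turn (adjv n) in key *.
set q := Num.sqrt (adjq n).
have q_gt0 : 0 < q by rewrite sqrtr_gt0 adjq_gt0.
have Kq : adjq n = q ^+ 2 by rewrite sqr_sqrtr // ltW // adjq_gt0.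
have q_neq0 : q != 0 by rewrite gt_eqF.
rewrite /partner -/n -/b -/q adjqZ cross2Zr !dot2Zl !dot2Zr; split.
- by rewrite adjq_quarter_turn_adjv Kq; field.
- rewrite cross2_quarter_turn dot2_adjv -/n.
  by rewrite mulf_neq0 ?invr_eq0 // gt_eqF ?dot2_gt0.
- rewrite Kq in key; apply/eqP; rewrite -subr_eq0 -(mulr0 (q ^+ 2)^-1) -key.
  by apply/eqP; field.
Qed.
End AdjugateForm.

Section Ellipse.
Variable R : rcfType.
Implicit Type A : 'M[R]_2.

Lemma spd_mx22 A : spd A -> [/\ A 1 0 = A 0 1, 0 < A 0 0, 0 < A 1 1 & 0 < \det A].
Proof.
case=> Asym Apos; have r_sym : A 1 0 = A 0 1 by rewrite -{1}Asym mxE.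
have qA_gt0 a b e : (a != 0) || (b != 0) ->
    A 0 0 * a ^+ 2 + 2 * A 0 1 * a * b + A 1 1 * b ^+ 2 = e -> 0 < e.
  move=> ab_neq0 <-; have := Apos (vec2 a b); rewrite vec2_eq0 negb_and ab_neq0.
  rewrite qformE !mxE /= r_sym => /(_ isT).
  by rewrite (_ : A 0 1 + A 0 1 = 2 * A 0 1) //; ring.
have p_gt0 : 0 < A 0 0 by apply: (qA_gt0 1 0); rewrite ?oner_neq0 //; ring.
split=> //; first by apply: (qA_gt0 0 1); rewrite ?oner_neq0 ?orbT //; ring.
rewrite -(pmulr_rgt0 _ p_gt0); apply: (qA_gt0 (A 0 1) (- A 0 0)).
  by rewrite oppr_eq0 (gt_eqF p_gt0) orbT.
by rewrite det_mx22 r_sym; ring.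
Qed.

Lemma ellipse_adjq A v : A 1 0 = A 0 1 -> 0 < \det A ->
  ellipse A v <-> adjq (A 0 0) (A 0 1) (A 1 1) v = \det A.
Proof.
move=> r_sym det_gt0; have det_neq0 := lt0r_neq0 det_gt0.
have [i00 i01 i10 i11] := invmx22 det_neq0; rewrite /ellipse.
have -> : qform (invmx A) v = adjq (A 0 0) (A 0 1) (A 1 1) v / \det A.
  by rewrite qformE i00 i01 i10 i11 r_sym /adjq; field.
by split=> [/divr1_eq | ->]; last exact: divff.
Qed.

Lemma sqrt_det_tr_invmx A : 0 < \det A ->
  Num.sqrt (\det A) * Num.sqrt (\tr (invmx A)) = Num.sqrt (\tr A).
Proof.
move=> det_gt0; have [i00 _ _ i11] := invmx22 (lt0r_neq0 det_gt0).
rewrite -sqrtrM ?ltW // !mxtrace22 i00 i11 addrC -mulrDl mulrCA divff ?mulr1 //.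
exact: lt0r_neq0.
Qed.
End Ellipse.

Theorem corollary4p8 (R : rcfType) (A : 'M[R]_2) (hA : spd A)
    (x0 : 'cV[R]_2) (hx0 : ellipse A x0) :
  exists v1 v2 : 'cV[R]_2,
    [/\ lin_indep2 v1 v2, inscribed A v1 v2,
        (exists e1 e2 : bool, pvertex v1 v2 e1 e2 = x0),
        perimeter v1 v2 = 4 * Num.sqrt (\det A) * Num.sqrt (\tr (invmx A))
      & 4 * Num.sqrt (\det A) * Num.sqrt (\tr (invmx A)) = 4 * Num.sqrt (\tr A)].
Proof.
have [r_sym p_gt0 s_gt0 det_gt0] := spd_mx22 hA.
have detE : \det A = A 0 0 * A 1 1 - A 0 1 ^+ 2 by rewrite det_mx22 r_sym expr2.
have onE v : ellipse A v <-> adjq (A 0 0) (A 0 1) (A 1 1) v = A 0 0 * A 1 1 - A 0 1 ^+ 2.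
  by rewrite -detE; exact: ellipse_adjq.
have x0E : adjq (A 0 0) (A 0 1) (A 1 1) x0 = A 0 0 * A 1 1 - A 0 1 ^+ 2 by apply/onE.
rewrite detE in det_gt0.
have [wE cross_neq0 key] := partner_spec s_gt0 det_gt0 x0E.
set w := partner _ _ _ x0 in wE cross_neq0 key.
have sqrt_trE : Num.sqrt (\det A) * Num.sqrt (\tr (invmx A)) = Num.sqrt (A 0 0 + A 1 1).
  by rewrite sqrt_det_tr_invmx ?mxtrace22 // detE.
exists (x0 + w), (x0 - w); split.
- exact/lin_indep2_addsub/lin_indep2_cross.
- by apply: inscribed_addsub; apply/onE.
- by exists false, false; rewrite pvertex_addsub scale1r.
- rewrite -mulrA sqrt_trE; apply: perimeter_addsub key; rewrite ?addr_gt0 //.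
  + exact: dot2_le_trace x0E.
  + exact: dot2_le_trace wE.
- by rewrite -mulrA sqrt_trE mxtrace22.
Qed.
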